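(* Assume $q_*(y)>0$ if and only if $\mathrm{numK}(y)=0$, and let $T>0$. For every $t\in[0,T)$, every $y\in\mathcal{Y}$, every coordinate $i$ with $y_i=K$ and every $k\in\{1,\dots,K-1\}$, $$\frac{q^\gets_t(y[i\to k])}{q^\gets_t(y)}\le \frac{1}{e^{T-t}-1},$$ where $y[i\to k]$ denotes $y$ with its $i$-th coordinate replaced by $k$.
   Context: Fix integers $K\ge2$, $d\ge1$, $\mathcal{Y}=\{1,\dots,K\}^d$; the symbol $K$ is the mask token and $\mathrm{numK}(y)=\#\{i:y_i=K\}$. The masked forward process is the continuous-time Markov chain on $\mathcal{Y}$ started at $q_*$ in which each non-mask coordinate independently turns into $K$ at rate $1$ and $K$ is absorbing; i.e. with rate function $R^\to(y,y')=1$ if $y,y'$ differ in exactly one coordinate $i$ with $y_i=K$, $R^\to(y,y)=-(d-\mathrm{numK}(y))$, and $0$ otherwise. Its marginals are $q^\to_t$, and $q^\gets_t:=q^\to_{T-t}$. *)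

From HB Require Import structures.
From mathcomp Require Import all_boot all_order all_algebra.
From mathcomp Require Import all_classical all_reals all_analysis.
Set Implicit Arguments. Unset Strict Implicit. Unset Printing Implicit Defensive.
Import Order.TTheory GRing.Theory Num.Theory.
Import numFieldNormedType.Exports.
Local Open Scope classical_set_scope.
Local Open Scope ring_scope.

(* State space Y = {1,...,K}^d, encoded as functions 'I_d -> 'I_K;
   the value v : 'I_K encodes the symbol v+1, so the mask token K is the
   ordinal with value K-1. *)
Definition state (d K : nat) := {ffun 'I_d -> 'I_K}.

Definition isMask (K : nat) (v : 'I_K) : bool := val v == K.-1.

Definition numK (d K : nat) (y : state d K) : nat := #|[set i | isMask (y i)]|.

Definition replace (d K : nat) (y : state d K) (i : 'I_d) (k : 'I_K) : state d K :=
  [ffun j => if j == i then k else y j].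

(* Rate function R^->(x, x') of the masked forward CTMC (rate of jumping
   from x to x'): 1 if x, x' differ in exactly one coordinate i and x'_i = K
   (a non-mask coordinate turns into the mask), -(d - numK x) on the
   diagonal, 0 otherwise. *)
Definition Rfwd (R : realType) (d K : nat) (x x' : state d K) : R :=
  if x == x' then - ((d - numK x)%:R)
  else if (#|[set i | x i != x' i]| == 1%N) &&
          [exists i, (x i != x' i) && isMask (x' i)] then 1 else 0.

Definition forward_marginals (R : realType) (d K : nat)
    (qstar : state d K -> R) (q : R -> state d K -> R) : Prop :=
  (forall y, q 0 y = qstar y) /\
  (forall y : state d K, (fun t : R => q t y) @ (0 : R)^'+ --> q 0 y) /\
  (forall t : R, 0 < t -> forall y : state d K,
      is_derive t (1 : R) (fun s : R => q s y) (\sum_(x : state d K) q t x * Rfwd R x y)).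

Definition is_distribution (R : realType) (d K : nat) (qstar : state d K -> R) : Prop :=
  (forall y, 0 <= qstar y) /\ \sum_(y : state d K) qstar y = 1.

From HB Require Import structures.
From mathcomp Require Import all_boot all_order all_algebra.
From mathcomp Require Import all_classical all_reals all_analysis.
From mathcomp Require Import ring.
Import Order.TTheory GRing.Theory Num.Theory.
Import numFieldNormedType.Exports.
Local Open Scope ring_scope.

(** Fix a coordinate [i] and, for a state [w] masked at [i], let [P_t(w)] be the mass
    that [q_t] puts on the states that agree with [w] off [i] and are unmasked at [i].
    The only jumps into [w] from states unmasked at [i] are the maskings of [i], and
    masking [i] at both ends preserves the rates between states unmasked at [i], up to
    the exit rate 1 of [i] itself. Hence [h_t(w) = q_t(w) - (e^t - 1) P_t(w)] solves,
    on the states masked at [i], the same linear system [h' = h R] as [q_t], with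
    [h_0 = 0] since [q_*] vanishes on masked states. Every jump increases [numK], so
    the system is triangular and a Gronwall-type comparison, state by state, gives
    [h = 0]: [q_t(w) = (e^t - 1) P_t(w) >= (e^t - 1) q_t(w[i -> k])]. *)

(* [numK] and [Rfwd] count classical-set comprehensions. *)
Lemma card_classic_setE (T : finType) (P : pred T) :
  #|[set x | P x]%classic| = #|[set x | P x]|.
Proof. by apply: eq_card => x; rewrite !inE /=; apply/idP/idP; rewrite in_setE. Qed.

Lemma nat_measure_ind (T : Type) (f : T -> nat) (P : T -> Prop) :
  (forall y, (forall x, (f x < f y)%N -> P x) -> P y) -> forall y, P y.
Proof.
move=> IH y; have [n] := ubnP (f y); elim: n y => // n IHn y /ltnSE lty.
by apply: IH => x ltx; apply: IHn; apply: leq_trans lty.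
Qed.

Section Rates.
Context {R : realType} {d K : nat}.
Implicit Types x y z w : state d K.

Lemma isMask_eq {a b : 'I_K} : isMask a -> isMask b -> a = b.
Proof. by move=> /eqP ha /eqP hb; apply: val_inj; rewrite ha hb. Qed.

Lemma numKE x : numK x = #|[set j | isMask (x j)]|.
Proof. exact: card_classic_setE. Qed.

Lemma numK_le x : (numK x <= d)%N.
Proof. by rewrite numKE; apply: leq_trans (max_card _) _; rewrite card_ord. Qed.

Lemma Rfwd_diag x : Rfwd R x x = - (d - numK x)%:R.
Proof. by rewrite /Rfwd eqxx. Qed.

Lemma Rfwd_ge0 x y : x != y -> 0 <= Rfwd R x y.
Proof. by rewrite /Rfwd => /negbTE ->; case: ifP. Qed.

Lemma Rfwd_numK_lt x y : x != y -> Rfwd R x y != 0 -> (numK x < numK y)%N.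
Proof.
rewrite /Rfwd card_classic_setE => /negbTE ->; case: ifP; last by rewrite eqxx.
move=> /andP[/cards1P[a Da] /existsP[i0 /andP[xy_i0 my_i0]]] _.
have /set1P i0a : i0 \in [set a] by rewrite -Da inE.
rewrite !numKE; apply: proper_card; apply/properP; split.
  apply/fintype.subsetP => j; rewrite !inE => mxj.
  have [ji0|ji0] := eqVneq j i0.
    by subst j; case/negP: xy_i0; rewrite (isMask_eq mxj my_i0).
  have : j \notin [set j | x j != y j] by rewrite Da inE -i0a.
  by rewrite inE negbK => /eqP <-.
exists i0; rewrite inE //; apply: contra xy_i0 => mx.
by rewrite (isMask_eq mx my_i0).
Qed.

Section MaskAt.
Variables (mk : 'I_K) (mk_mask : isMask mk) (i : 'I_d).

Definition mask_at x := replace x i mk.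

Lemma mask_atE x j : mask_at x j = if j == i then mk else x j.
Proof. by rewrite ffunE. Qed.

Lemma mask_at_mask x : isMask (mask_at x i).
Proof. by rewrite mask_atE eqxx. Qed.

Lemma mask_at_replace w (a : 'I_K) : isMask (w i) -> mask_at (replace w i a) = w.
Proof.
move=> mw; apply/ffunP => j; rewrite mask_atE ffunE.
by case: eqP => [->|//]; apply/esym/isMask_eq.
Qed.

Lemma numK_mask_at z : ~~ isMask (z i) -> numK (mask_at z) = (numK z).+1.
Proof.
move=> nz; rewrite !numKE.
have -> : [set j | isMask (mask_at z j)] = i |: [set j | isMask (z j)].
  by apply/setP => j; rewrite !inE mask_atE; case: eqP => [->|]; rewrite ?mk_mask.
by rewrite cardsU1 inE nz.
Qed.

Lemma Rfwd_into_masked z y : isMask (y i) -> ~~ isMask (z i) ->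
  Rfwd R z y = (mask_at z == y)%:R.
Proof.
move=> my nz.
have zi_yi : z i != y i by apply: contra nz => /eqP ->.
have zy : z != y by apply: contra zi_yi => /eqP ->.
rewrite /Rfwd card_classic_setE (negbTE zy).
suff -> : (#|[set j | z j != y j]| == 1%N) && [exists j, (z j != y j) && isMask (y j)]
          = (mask_at z == y) by case: (_ == _).
apply/idP/eqP.
  move=> /andP[/cards1P[a Da] _].
  have /set1P ia : i \in [set a] by rewrite -Da inE.
  apply/ffunP => j; rewrite mask_atE; case: eqP => [->|/eqP ji].
    exact: isMask_eq.
  have : j \notin [set j | z j != y j] by rewrite Da inE -ia.
  by rewrite inE negbK => /eqP.
move=> <-; apply/andP; split.
  apply/cards1P; exists i; apply/setP => j; rewrite !inE mask_atE.
  have [->|_] := eqVneq j i; last by rewrite eqxx.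
  by apply: contraNneq nz => ->.
apply/existsP; exists i; rewrite mask_at_mask andbT mask_atE eqxx.
by apply: contraNneq nz => ->.
Qed.

(* Masking [i] at both ends preserves the rate between two states that share the
   unmasked value at [i]; on the diagonal it removes exactly the exit rate 1 of [i]. *)
Lemma Rfwd_into_unmasked x z : ~~ isMask (z i) ->
  Rfwd R x z = (x i == z i)%:R * (Rfwd R (mask_at x) (mask_at z) - (x == z)%:R).
Proof.
move=> nz; have [->|xz] := eqVneq x z.
  rewrite eqxx mul1r !Rfwd_diag numK_mask_at //.
  have := numK_le (mask_at z); rewrite numK_mask_at // => le_z.
  by rewrite -[(d - numK z)%N](@subnSK (numK z) d) // -addn1 natrD opprD.
have [exi|nxi] := eqVneq (x i) (z i); last first.
  rewrite mul0r /Rfwd card_classic_setE (negbTE xz); case: ifP => //.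
  move=> /andP[/cards1P[a Da] /existsP[i0 /andP[xz_i0 mz_i0]]].
  have /set1P i0a : i0 \in [set a] by rewrite -Da inE.
  have /set1P ia : i \in [set a] by rewrite -Da inE.
  by move: mz_i0; rewrite i0a -ia (negbTE nz).
rewrite mul1r subr0.
have agree j : (x j != z j) = (mask_at x j != mask_at z j).
  by rewrite !mask_atE; have [->|//] := eqVneq j i; rewrite exi !eqxx.
have mxz : mask_at x != mask_at z.
  apply: contra xz => /eqP mxz; apply/eqP/ffunP => j.
  by apply/eqP; move: (agree j); rewrite mxz eqxx => /negbFE.
rewrite /Rfwd !card_classic_setE (negbTE xz) (negbTE mxz).
have -> : [set j | x j != z j] = [set j | mask_at x j != mask_at z j].
  by apply/setP => j; rewrite !inE agree.
congr (if _ && _ then _ else _); apply: eq_existsb => j.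
rewrite agree !mask_atE; have [->|//] := eqVneq j i.
by rewrite mk_mask (negbTE nz) eqxx.
Qed.

Definition unmasked_mass (p : state d K -> R) w :=
  \sum_(z | (mask_at z == w) && ~~ isMask (z i)) p z.

Lemma unmasked_mass_ge_replace p w k : (forall z, 0 <= p z) ->
  isMask (w i) -> ~~ isMask k -> p (replace w i k) <= unmasked_mass p w.
Proof.
move=> p_ge0 mw nk; rewrite /unmasked_mass (bigD1 (replace w i k)) /=.
  by rewrite lerDl sumr_ge0.
by rewrite mask_at_replace // eqxx ffunE eqxx.
Qed.

Lemma sum_unmasked_by_fiber (p F : state d K -> R) :
  \sum_(x : state d K | ~~ isMask (x i)) p x * F (mask_at x) =
  \sum_(v : state d K | isMask (v i)) unmasked_mass p v * F v.
Proof.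
rewrite (partition_big mask_at (fun v => isMask (v i))) /=;
  last by move=> x _; apply: mask_at_mask.
apply: eq_bigr => v _; rewrite /unmasked_mass mulr_suml.
by apply: eq_big => [x|x /andP[_ /eqP ->]] //; rewrite andbC.
Qed.

Lemma sum_fiber_agree w x : isMask (w i) ->
  \sum_(z | (mask_at z == w) && ~~ isMask (z i)) ((x i == z i)%:R : R) =
  (~~ isMask (x i))%:R.
Proof.
move=> mw; case nx: (isMask (x i)) => /=.
  by apply: big1 => z /andP[_]; case: eqP => // <-; rewrite nx.
set r := replace w i (x i).
have ri : r i = x i by rewrite ffunE eqxx.
rewrite (bigD1 r) /=; last by rewrite mask_at_replace // eqxx ri nx.
rewrite ri eqxx big1 ?addr0 // => z /andP[/andP[/eqP zw _] zr].
case: eqP => // xz; case/eqP: zr; apply/ffunP => j.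
rewrite ffunE; have [->//|ji] := eqVneq j i.
by rewrite -zw mask_atE (negbTE ji).
Qed.

Lemma inflow_masked p w : isMask (w i) ->
  \sum_x p x * Rfwd R x w =
  \sum_(v : state d K | isMask (v i)) p v * Rfwd R v w + unmasked_mass p w.
Proof.
move=> mw; rewrite (bigID (fun x => isMask (x i))) /=; congr (_ + _).
rewrite /unmasked_mass big_mkcond [RHS]big_mkcond /=; apply: eq_bigr => z _.
case nz: (isMask (z i)); first by rewrite andbF.
by rewrite Rfwd_into_masked ?nz // andbT; case: (_ == _); rewrite ?mulr1 ?mulr0.
Qed.

Lemma inflow_unmasked p z w : mask_at z = w -> ~~ isMask (z i) ->
  \sum_x p x * Rfwd R x z = \sum_x p x * Rfwd R (mask_at x) w * (x i == z i)%:R - p z.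
Proof.
move=> zw nz; under eq_bigr => x _ do rewrite Rfwd_into_unmasked // zw.
rewrite (bigD1 z) //= [in RHS](bigD1 z) //= !eqxx zw.
have -> : \sum_(x | x != z) p x * ((x i == z i)%:R * (Rfwd R (mask_at x) w - (x == z)%:R))
        = \sum_(x | x != z) p x * Rfwd R (mask_at x) w * (x i == z i)%:R.
  by apply: eq_bigr => x xz; rewrite (negbTE xz) subr0; ring.
by rewrite -[true%:R]/(1 : R); ring.
Qed.

Lemma unmasked_mass_inflow p w : isMask (w i) ->
  \sum_(z | (mask_at z == w) && ~~ isMask (z i)) \sum_x p x * Rfwd R x z =
  \sum_(v : state d K | isMask (v i)) unmasked_mass p v * Rfwd R v w - unmasked_mass p w.
Proof.
move=> mw; rewrite (eq_bigr (fun z =>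
  \sum_x p x * Rfwd R (mask_at x) w * (x i == z i)%:R - p z)); last first.
  by move=> z /andP[/eqP zw nz]; apply: inflow_unmasked.
rewrite sumrB exchange_big /=; congr (_ - _).
rewrite -(sum_unmasked_by_fiber p (fun v => Rfwd R v w)) [RHS]big_mkcond /=.
apply: eq_bigr => x _; rewrite -mulr_sumr sum_fiber_agree //.
by case: (isMask (x i)); rewrite ?mulr1 ?mulr0.
Qed.

End MaskAt.
End Rates.

Local Open Scope classical_set_scope.

Section RealODE.
Context {R : realType}.

Lemma is_derive_big_sum (I : finType) (P : pred I) (h : I -> R -> R) (dh : I -> R)
    (t : R) :
  (forall j, is_derive t 1 (h j) (dh j)) ->
  is_derive t 1 (fun s => \sum_(j | P j) h j s) (\sum_(j | P j) dh j).
Proof.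
move=> dh_j; have -> : (fun s => \sum_(j | P j) h j s) = \sum_(j | P j) h j.
  by apply/funext => s; rewrite fct_sumE.
elim/big_ind2: _ => [|f1 d1 f2 d2 df1 df2|//]; first exact: is_derive_cst.
exact: is_deriveD.
Qed.

Lemma is_derive_expRM (a t : R) :
  is_derive t 1 (fun s => expR (a * s)) (expR (a * t) * a).
Proof.
have da : is_derive t 1 (fun s : R => a * s) a.
  apply: (is_derive_eq (@is_deriveZ R R R id a t 1 1 (is_derive_id t 1))).
  by rewrite /GRing.scale /= mulr1.
exact: is_derive1_comp.
Qed.

(* The integrating factor [expR (- c * t)] turns [g' = c g + p] into
   [(e^{-ct} g)' = e^{-ct} p >= 0]. *)
Lemma linear_ode_ge0 (c l : R) (g p : R -> R) :
  (forall t : R, 0 < t -> is_derive t 1 g (c * g t + p t)) ->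
  (forall t : R, 0 < t -> 0 <= p t) ->
  g x @[x --> 0^'+] --> l -> 0 <= l -> forall t : R, 0 < t -> 0 <= g t.
Proof.
move=> dg p_ge0 gl l_ge0 t t0.
pose f (s : R) := expR (- c * s) * g s.
have df (s : R) : 0 < s -> is_derive s 1 f (expR (- c * s) * p s).
  move=> s0; apply: (is_derive_eq (is_deriveM (is_derive_expRM _ _) (dg s s0))).
  rewrite /GRing.scale /=; ring.
have f_ndecr (u : R) : 0 < u -> u <= t -> f u <= f t.
  move=> u0 ut; apply: (@ger0_derive1_ndecr _ f u t) => //.
  - by move=> x; rewrite in_itv /= => /andP[ux _]; have := df x (lt_trans u0 ux).
  - move=> x; rewrite in_itv /= => /andP[ux _].
    have dfx := df x (lt_trans u0 ux).
    by rewrite derive1E derive_val mulr_ge0 ?expR_ge0 ?p_ge0 ?(lt_trans u0 ux).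
  - apply: continuous_in_subspaceT => x; rewrite inE /= in_itv /= => /andP[ux _].
    have x0 := lt_le_trans u0 ux; have := df x x0 => dfx.
    by apply: differentiable_continuous; apply/derivable1_diffP.
have fl : f x @[x --> 0^'+] --> l.
  have e1 : expR (- c * x) @[x --> 0^'+] --> (1 : R).
    rewrite -[X in _ --> X](expR0 R) -[X in expR X](mulr0 (- c)).
    have dexp : differentiable (fun s : R => expR (- c * s)) 0.
      by apply/derivable1_diffP; have := is_derive_expRM (- c) 0.
    exact/cvg_at_right_filter/(differentiable_continuous dexp).
  by rewrite -[l]mul1r; apply: cvgM.
have : 0 <= f t.
  apply: le_trans l_ge0 _; apply: (cvgr_to_le fl); near=> x; apply: f_ndecr.
    by near: x; exact: nbhs_right_gt.
  by apply/ltW; near: x; exact: nbhs_right_lt.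
by rewrite pmulr_rge0 // expR_gt0.
Unshelve. all: by end_near.
Qed.

Lemma linear_ode_eq0 (c : R) (g : R -> R) :
  (forall t : R, 0 < t -> is_derive t 1 g (c * g t)) ->
  g x @[x --> 0^'+] --> 0 -> forall t : R, 0 < t -> g t = 0.
Proof.
move=> dg g0 t t0; apply/eqP; rewrite eq_le; apply/andP; split; last first.
  apply: (linear_ode_ge0 c 0 g (fun=> 0)) g0 _ t t0 => // s s0.
  by rewrite addr0; apply: dg.
rewrite -oppr_ge0; apply: (linear_ode_ge0 c 0 (- g) (fun=> 0)) _ _ t t0 => //.
- move=> s s0; apply: (is_derive_eq (is_deriveN (dg s s0))).
  by rewrite addr0 mulrN.
- by have := cvgN g0; rewrite oppr0; apply.
Qed.

End RealODE.

Section ForwardEquation.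
Context {R : realType} {d K : nat}.
Variable q : R -> state d K -> R.
Hypothesis q_derive : forall t : R, 0 < t -> forall y : state d K,
  is_derive t 1 (fun s => q s y) (\sum_x q t x * Rfwd R x y).
Hypothesis q_cvg0 : forall y : state d K, (fun t => q t y) @ 0^'+ --> q 0 y.

(* [numK] increases along every jump, so the forward equation is triangular. *)
Lemma forward_ge0 : (forall y, 0 <= q 0 y) ->
  forall (y : state d K) (t : R), 0 < t -> 0 <= q t y.
Proof.
move=> q0_ge0 y; elim/(@nat_measure_ind _ (@numK d K)): y => y IH t t0.
apply: (linear_ode_ge0 (Rfwd R y y) (q 0 y) (fun s => q s y)
  (fun s => \sum_(x | x != y) q s x * Rfwd R x y) _ _ (q_cvg0 y) (q0_ge0 y) t t0).
- move=> s s0; have -> : Rfwd R y y * q s y + \sum_(x | x != y) q s x * Rfwd R x y =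
                          \sum_x q s x * Rfwd R x y by rewrite [RHS](bigD1 y) //= mulrC.
  exact: q_derive.
- move=> s s0; apply: sumr_ge0 => x xy.
  have [->|nz] := eqVneq (Rfwd R x y) 0; first by rewrite mulr0.
  by rewrite mulr_ge0 ?Rfwd_ge0 // (IH _ (Rfwd_numK_lt _ _ xy nz)).
Qed.

Variables (mk : 'I_K) (mk_mask : isMask mk) (i : 'I_d).

Definition mask_defect (t : R) (w : state d K) :=
  q t w - (expR t - 1) * unmasked_mass mk i (q t) w.

Lemma mask_defect_derive (t : R) (w : state d K) : 0 < t -> isMask (w i) ->
  is_derive t 1 (fun s => mask_defect s w)
    (\sum_(v : state d K | isMask (v i)) mask_defect t v * Rfwd R v w).
Proof.
move=> t0 mw.
have dP : is_derive t 1 (fun s => unmasked_mass mk i (q s) w)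
    (\sum_(z | (mask_at mk i z == w) && ~~ isMask (z i)) \sum_x q t x * Rfwd R x z).
  by apply: is_derive_big_sum => z; apply: q_derive.
have dE : is_derive t 1 (fun s : R => expR s - 1) (expR t).
  apply: (is_derive_eq (is_deriveB (is_derive_expR t) (is_derive_cst (1 : R) t 1))).
  by rewrite subr0.
have -> : (fun s => mask_defect s w) =
    (fun s => q s w) - (fun s : R => expR s - 1) * (fun s => unmasked_mass mk i (q s) w).
  by apply/funext.
apply: (is_derive_eq (is_deriveB (q_derive t t0 w) (is_deriveM dE dP))).
rewrite (inflow_masked _ mk_mask i) // (unmasked_mass_inflow _ mk_mask) // /GRing.scale /=.
have -> : \sum_(v : state d K | isMask (v i)) mask_defect t v * Rfwd R v w =
    \sum_(v : state d K | isMask (v i)) q t v * Rfwd R v w - (expR t - 1) *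
    \sum_(v : state d K | isMask (v i)) unmasked_mass mk i (q t) v * Rfwd R v w.
  by rewrite mulr_sumr -sumrB; apply: eq_bigr => v _; rewrite /mask_defect; ring.
ring.
Qed.

Lemma mask_defect_cvg0 (w : state d K) :
  (fun s => mask_defect s w) @ 0^'+ --> q 0 w.
Proof.
have e0 : (fun s : R => expR s - 1) @ 0^'+ --> (0 : R).
  have := cvgB (cvg_at_right_filter (@continuous_expR R 0)) (cvg_cst (1 : R)).
  by rewrite expR0 subrr; apply.
have P0 : (fun s => unmasked_mass mk i (q s) w) @ 0^'+ --> unmasked_mass mk i (q 0) w.
  by apply: (cvg_big add_continuous) => // z _; apply: q_cvg0.
by have := cvgB (q_cvg0 w) (cvgM e0 P0); rewrite mul0r subr0; apply.
Qed.

Lemma mask_defect_eq0 : (forall w : state d K, isMask (w i) -> q 0 w = 0) ->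
  forall w : state d K, isMask (w i) -> forall t : R, 0 < t -> mask_defect t w = 0.
Proof.
move=> q0_masked w; elim/(@nat_measure_ind _ (@numK d K)): w => w IH mw.
apply: (linear_ode_eq0 (Rfwd R w w) (fun s => mask_defect s w)); last first.
  by have := mask_defect_cvg0 w; rewrite q0_masked.
move=> s s0; apply: (is_derive_eq (mask_defect_derive s w s0 mw)).
rewrite (bigD1 w) //= mulrC big1 ?addr0 // => v /andP[mv vw].
have [->|nz] := eqVneq (Rfwd R v w) 0; first by rewrite mulr0.
by rewrite (IH v (Rfwd_numK_lt _ _ vw nz) mv s s0) mul0r.
Qed.

End ForwardEquation.

Theorem mainTheorem4 (R : realType) (K d : nat) (hK : (2 <= K)%N) (hd : (1 <= d)%N)
    (qstar : state d K -> R) (q : R -> state d K -> R)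
    (hdist : is_distribution qstar)
    (hsupp : forall y, 0 < qstar y <-> numK y = 0%N)
    (hfwd : forward_marginals qstar q)
    (T : R) (hT : 0 < T) :
  forall (t : R), 0 <= t -> t < T ->
  forall (y : state d K) (i : 'I_d) (k : 'I_K),
    isMask (y i) -> ~~ isMask k ->
    q (T - t) (replace y i k) / q (T - t) y <= (expR (T - t) - 1)^-1.
Proof.
move=> t _ tT y i k my nk.
have : 0 < T - t by rewrite subr_gt0.
move: (T - t) => s s0.
case: hfwd => q0E [q_cvg0 q_derive]; case: hdist => qstar_ge0 _.
have q0_ge0 w : 0 <= q 0 w by rewrite q0E.
have q0_masked (w : state d K) : isMask (w i) -> q 0 w = 0.
  move=> mw; rewrite q0E; apply/eqP; rewrite eq_le qstar_ge0 andbT leNgt.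
  by apply/negP => /hsupp /eqP; rewrite numKE (cardD1 i) inE mw.
have q_ge0 w : 0 <= q s w := forward_ge0 _ q_derive q_cvg0 q0_ge0 w _ s0.
have e_gt0 : 0 < expR s - 1 by rewrite subr_gt0 expR_gt1.
have qyE : q s y = (expR s - 1) * unmasked_mass (y i) i (q s) y.
  apply/eqP; rewrite -subr_eq0; apply/eqP.
  exact: (mask_defect_eq0 _ q_derive q_cvg0 _ my _ q0_masked _ my _ s0).
have [qy0|qy_neq0] := eqVneq (q s y) 0.
  by rewrite qy0 invr0 mulr0 invr_ge0 ltW.
have qy_gt0 : 0 < q s y by rewrite lt0r qy_neq0 q_ge0.
rewrite ler_pdivrMr // qyE mulrA mulVf ?mul1r ?gt_eqF //.
exact: unmasked_mass_ge_replace.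
Qed.
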